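(* Let $n\ge1$ and $0\le k\le n$. There exists a nonempty finite multiset $\{\mathcal{B}_1,\dots,\mathcal{B}_s\}$ of quadratic monomial bases of $Z_k$ which is $X$-balanced, i.e. such that, counting each monomial $x_ax_b$ in each $\mathcal{B}_\ell$ with the exponents of its variables and summing over $\ell=1,\dots,s$, every variable $x_0,\dots,x_n$ occurs the same total number of times.
   Context: Let $x_i:=z^i$ for $0\le i\le n$, and $Z_k:=\operatorname{span}\{z^i: k\le i\le 2n-k\}\subset\mathbb{C}[z]$. A quadratic monomial basis of $Z_k$ is a set of monomials $x_ax_b$ ($0\le a\le b\le n$) whose images $z^{a+b}$ form a basis of $Z_k$, i.e. the map $x_ax_b\mapsto a+b$ is a bijection from the set onto $\{k,k+1,\dots,2n-k\}$. *)

From mathcomp Require Import all_boot.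
Set Implicit Arguments. Unset Strict Implicit. Unset Printing Implicit Defensive.

(* A monomial x_a x_b (0 <= a <= b <= n) is represented by the pair (a, b)
   of indices in 'I_n.+1; its image in C[z] is z^(a+b). *)
Definition monomial (n : nat) := ('I_n.+1 * 'I_n.+1)%type.

(* B is a quadratic monomial basis of Z_k = span{z^i : k <= i <= 2n-k}:
   all pairs satisfy a <= b, and (a,b) |-> a+b is a bijection from B
   onto {k, ..., 2n-k}. *)
Definition is_quad_monomial_basis (n k : nat) (B : {set monomial n}) : Prop :=
  (forall p, p \in B -> (p.1 <= p.2)%N) /\
  (forall p, p \in B -> (k <= p.1 + p.2 <= 2 * n - k)%N) /\
  {in B &, injective (fun p : monomial n => (p.1 + p.2)%N)} /\
  (forall m, (k <= m <= 2 * n - k)%N -> exists2 p, p \in B & (p.1 + p.2)%N = m).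

Definition var_occ (n : nat) (i : 'I_n.+1) (p : monomial n) : nat :=
  ((p.1 == i) + (p.2 == i))%N.

Definition total_occ (n : nat) (s : seq {set monomial n}) (i : 'I_n.+1) : nat :=
  (\sum_(B <- s) \sum_(p in B) var_occ i p)%N.

Definition X_balanced (n : nat) (s : seq {set monomial n}) : Prop :=
  exists c, forall i : 'I_n.+1, total_occ s i = c.

From mathcomp Require Import all_boot.
From mathcomp Require Import zify.
Set Implicit Arguments. Unset Strict Implicit. Unset Printing Implicit Defensive.

(* A basis of Z_lo is given by any "split" f choosing, in each degree m of
   [lo, 2n - lo], the monomial x_(f m) x_(m - f m); x_i then occurs once per
   degree with f m = i and once per degree with m - f m = i (split_basis).

   We generalise the statement to windows: the indices t, ..., t + M of an
   ambient n = M + 2t, and the space Z_(K + 2t), which only needs the indices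
   of the window.  A window solution (window_balanced) is a nonempty multiset of
   bases of Z_(K + 2t) in which every x_i of the window occurs c > 0 times and
   every other x_i never.  All bases used are "gap splits" C_d, pairing each
   degree into two indices of the window about d apart (the right one capped at
   the window's end); their occurrence profiles are computed in closed form.
   Window solutions are built by strong induction on M (window_exists): with
   L = M - K, we combine a few C_d with scaled window solutions for the inner
   windows [t+1, t+M-1] and [t+L, t+2L+1] or [t+L+1, t+M-L-1], separating the
   cases K = 0, K = 1, K <= L, L < K <= 2L, K = 2L+1 and K >= 2L+2.
   The theorem is the window t = 0, M = n. *)

Lemma count_window N x y :
  \sum_(m < N) (((x <= m) && (m < y)) : nat) = minn N y - x.
Proof.
rewrite -(big_mkord xpredT (fun m => (((x <= m) && (m < y)) : nat))).
elim: N => [|N IH]; first by rewrite big_geq //; lia.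
rewrite big_nat_recr //= IH; case: (boolP ((x <= N) && (N < y))) => /= h; lia.
Qed.

Section SplitBasis.
Variables (n lo : nat) (f : nat -> nat).
Hypothesis lo_le_n : lo <= n.
Hypothesis split_ok : forall m, lo <= m <= 2 * n - lo -> f m <= m - f m <= n.

Definition split_pair (m : nat) : monomial n := (inord (f m), inord (m - f m)).

Definition split_degrees : {set 'I_(2 * n).+1} := [set m : 'I_(2 * n).+1 | lo <= m <= 2 * n - lo].

Definition split_basis : {set monomial n} :=
  [set split_pair (nat_of_ord m) | m in split_degrees].

Lemma split_pair1 m : lo <= m <= 2 * n - lo -> ((split_pair m).1 : nat) = f m.
Proof. by move=> hm; rewrite /= inordK //; have := split_ok hm; lia. Qed.

Lemma split_pair2 m : lo <= m <= 2 * n - lo -> ((split_pair m).2 : nat) = m - f m.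
Proof. by move=> hm; rewrite /= inordK //; have := split_ok hm; lia. Qed.

Lemma split_pair_deg m :
  lo <= m <= 2 * n - lo -> ((split_pair m).1 + (split_pair m).2 = m)%N.
Proof. by move=> hm; rewrite split_pair1 // split_pair2 //; have := split_ok hm; lia. Qed.

Lemma split_pair_inj :
  {in split_degrees &, injective (fun m : 'I_(2 * n).+1 => split_pair (nat_of_ord m))}.
Proof.
move=> m1 m2; rewrite !inE => h1 h2 /= e; apply: ord_inj.
by rewrite -(split_pair_deg h1) -(split_pair_deg h2) e.
Qed.

Lemma split_basis_ok : is_quad_monomial_basis lo split_basis.
Proof.
split; [|split; [|split]].
- move=> p /imsetP[m]; rewrite inE => hm ->; rewrite (split_pair1 hm) (split_pair2 hm).
  by case/andP: (split_ok hm).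
- by move=> p /imsetP[m]; rewrite inE => hm ->; rewrite split_pair_deg.
- move=> _ _ /imsetP[m1 + ->] /imsetP[m2 + ->]; rewrite !inE => h1 h2.
  by rewrite (split_pair_deg h1) (split_pair_deg h2) => /ord_inj ->.
- move=> m hm; have hm' : m < (2 * n).+1 by case/andP: hm; lia.
  exists (split_pair m); last exact: split_pair_deg.
  by apply/imsetP; exists (Ordinal hm'); rewrite ?inE.
Qed.

Lemma split_basis_occ (i : 'I_n.+1) :
  \sum_(p in split_basis) var_occ i p =
  \sum_(m < (2 * n).+1) (((lo <= m <= 2 * n - lo) && (f m == i)) : nat) +
  \sum_(m < (2 * n).+1) (((lo <= m <= 2 * n - lo) && (m - f m == i)) : nat).
Proof.
rewrite big_imset /=; last exact: split_pair_inj.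
rewrite -big_split (big_mkcond (fun m => m \in split_degrees)) /=.
apply: eq_bigr => m _; rewrite inE; case: ifP => hm //.
by rewrite /var_occ -(split_pair2 hm) -(split_pair1 hm) !val_eqE.
Qed.
End SplitBasis.

(* In window coordinates (indices 0..M, degrees u), the gap-d split puts the
   left index at max(u - M, (u - d)/2): the two indices are about d apart
   unless the right one would pass M, in which case it is M. *)
Definition gap_left (M d u : nat) := maxn (u - M) ((u - d) %/ 2).

(* The degrees u whose left index is j form [left_lo, left_hi); those whose
   right index is j form [right_lo, right_hi). *)
Definition left_lo (M d j : nat) := if j == 0 then 0 else minn (M + j) (d + 2 * j).
Definition left_hi (M d j : nat) := (minn (M + j) (d + 2 * j + 1)).+1.
Definition right_lo (M d j : nat) := maxn j (2 * j - 1 - d).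
Definition right_hi (M d j : nat) :=
  if j < M then maxn j.+1 (2 * j + 1 - d) else (2 * M).+1.

Lemma gap_left_le M d u : u <= 2 * M -> gap_left M d u <= u - gap_left M d u <= M.
Proof. rewrite /gap_left => hu; lia. Qed.

Lemma gap_left_eqE M d u j :
  (gap_left M d u == j) = (left_lo M d j <= u < left_hi M d j).
Proof. rewrite /gap_left /left_lo /left_hi; case: j => [|j] /=; apply/idP/idP; lia. Qed.

(* The right index u - gap_left M d u is nondecreasing in u; the next three
   lemmas locate where it crosses j. *)
Lemma right_index_ge M d u j : j <= M -> (j <= u - gap_left M d u) = (right_lo M d j <= u).
Proof. rewrite /gap_left /right_lo => hj; apply/idP/idP; lia. Qed.

Lemma right_index_lt M d u j :
  j < M -> (u - gap_left M d u <= j) = (u < maxn j.+1 (2 * j + 1 - d)).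
Proof. rewrite /gap_left => hj; apply/idP/idP; lia. Qed.

Lemma right_index_le M d u : u - gap_left M d u <= M.
Proof. rewrite /gap_left; lia. Qed.

Lemma gap_right_eqE M d u j : u <= 2 * M -> j <= M ->
  (u - gap_left M d u == j) = (right_lo M d j <= u < right_hi M d j).
Proof.
move=> hu hj; rewrite eqn_leq right_index_ge // andbC /right_hi.
case: (ltnP j M) => hjM; first by rewrite right_index_lt.
have -> : j = M by apply/eqP; rewrite eqn_leq hj hjM.
by rewrite right_index_le ltnS hu !andbT.
Qed.

Lemma window_and K U a b u :
  ((K <= u <= U) && (a <= u < b)) = (maxn K a <= u < minn U.+1 b).
Proof. by rewrite geq_max leq_min ltnS; case: (K <= u); case: (a <= u); case: (u <= U). Qed.

(* Transport of a window count to the ambient space: if the index function g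
   of the window takes the value j exactly on [lo j, hi j), then the ambient
   index function F (shifted by t, with degrees shifted by 2t) takes the value
   i on an explicit interval of degrees, empty when i is outside the window. *)
Lemma shifted_count M K t (g F lo hi : nat -> nat) m i :
  (forall u, K <= u <= 2 * M - K -> g u <= M) ->
  (forall u j, K <= u <= 2 * M - K -> j <= M -> (g u == j) = (lo j <= u < hi j)) ->
  (forall u, F (2 * t + u) = t + g u) ->
  ((K + 2 * t <= m <= 2 * (M + 2 * t) - (K + 2 * t)) && (F m == i)) =
  ((2 * t + maxn K (lo (i - t)) <= m) &&
   (m < if t <= i <= t + M then 2 * t + minn (2 * M - K).+1 (hi (i - t)) else 0)).
Proof.
move=> g_le g_eq F_shift.
case: (ltnP m (2 * t)) => hm.
  have -> : (K + 2 * t <= m) = false by apply/negbTE; rewrite -ltnNge; lia.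
  have -> // : (2 * t + maxn K (lo (i - t)) <= m) = false.
  by apply/negbTE; rewrite -ltnNge; lia.
have [u ->] : exists u, m = 2 * t + u by exists (m - 2 * t); lia.
have -> : (K + 2 * t <= 2 * t + u <= 2 * (M + 2 * t) - (K + 2 * t)) = (K <= u <= 2 * M - K).
  by apply/idP/idP; lia.
rewrite F_shift leq_add2l.
case: (boolP (t <= i <= t + M)) => hiM; last first.
  rewrite ltn0 andbF; apply/negbTE/negP => /andP[hu /eqP e].
  by move: hiM; rewrite -e; have := g_le u hu; lia.
have [j -> hj] : exists2 j, i = t + j & j <= M by exists (i - t); lia.
rewrite addKn ltn_add2l -window_and.
by case: (boolP (K <= u <= 2 * M - K)) => hu //=; rewrite eqn_add2l g_eq.
Qed.

Definition gap_split (M t d m : nat) := t + gap_left M d (m - 2 * t).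

Definition gap_basis (n M K t d : nat) := split_basis n (K + 2 * t) (gap_split M t d).

(* Number of occurrences of the j-th window index as left (resp. right) index
   of C_d, and in total. *)
Definition left_count (M K d j : nat) :=
  minn (2 * M - K).+1 (left_hi M d j) - maxn K (left_lo M d j).
Definition right_count (M K d j : nat) :=
  minn (2 * M - K).+1 (right_hi M d j) - maxn K (right_lo M d j).
Definition gap_profile (M K d j : nat) := left_count M K d j + right_count M K d j.

Lemma gap_split_ok n M K t d m : n = M + 2 * t ->
  K + 2 * t <= m <= 2 * n - (K + 2 * t) ->
  gap_split M t d m <= m - gap_split M t d m <= n.
Proof.
move=> -> hm; have hu : m - 2 * t <= 2 * M by lia.
by have := gap_left_le d hu; rewrite /gap_split; lia.
Qed.

Lemma gap_basis_ok n M K t d : K <= M -> n = M + 2 * t ->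
  is_quad_monomial_basis (K + 2 * t) (gap_basis n M K t d).
Proof.
move=> hK hn; apply: split_basis_ok; first lia.
by move=> m; apply: gap_split_ok.
Qed.

Lemma gap_basis_occ n M K t d (i : 'I_n.+1) : K <= M -> n = M + 2 * t ->
  \sum_(p in gap_basis n M K t d) var_occ i p =
  if t <= i <= t + M then gap_profile M K d (i - t) else 0.
Proof.
move=> hK hn; have hlo : K + 2 * t <= n by lia.
rewrite (split_basis_occ hlo (fun m => @gap_split_ok n M K t d m hn)).
have u_le u : K <= u <= 2 * M - K -> u <= 2 * M by lia.
have gl_le u : K <= u <= 2 * M - K -> gap_left M d u <= M.
  by move/u_le/(gap_left_le d); lia.
have gr_le u : K <= u <= 2 * M - K -> u - gap_left M d u <= M.
  by move/u_le/(gap_left_le d); lia.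
have gr_eq u j : K <= u <= 2 * M - K -> j <= M ->
    (u - gap_left M d u == j) = (right_lo M d j <= u < right_hi M d j).
  by move/u_le; apply: gap_right_eqE.
have F_left u : gap_split M t d (2 * t + u) = t + gap_left M d u by rewrite /gap_split addKn.
have F_right u : 2 * t + u - gap_split M t d (2 * t + u) = t + (u - gap_left M d u).
  by rewrite F_left /gap_left; lia.
move: (nat_of_ord i) => {}i; rewrite hn.
under eq_bigr => m _ do
  rewrite (shifted_count _ _ gl_le (fun u j _ _ => gap_left_eqE M d u j) F_left).
under [X in _ + X]eq_bigr => m _ do
  rewrite (@shifted_count M K t _ (fun m => m - gap_split M t d m) _ _ _ _ gr_le gr_eq F_right).
rewrite !count_window /gap_profile /left_count /right_count; case: ifP => _; lia.
Qed.

Ltac case_minmax := repeat match goal with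
 | |- context [minn ?a ?b] => let H := fresh in case: (leqP a b) => H;
      [rewrite (minn_idPl H) | rewrite (minn_idPr (ltnW H))]; try (exfalso; lia)
 | |- context [maxn ?a ?b] => let H := fresh in case: (leqP a b) => H;
      [rewrite (maxn_idPr H) | rewrite (maxn_idPl (ltnW H))]; try (exfalso; lia)
 end.

Ltac case_ifs := repeat match goal with
 | |- context [if (?a <= ?b) && _ then _ else _] =>
      let H := fresh in case: (leqP a b) => H /=; try (exfalso; lia)
 | |- context [if ?a <= ?b then _ else _] =>
      let H := fresh in case: (leqP a b) => H; try (exfalso; lia)
 | |- context [if ?a < ?b then _ else _] =>
      let H := fresh in case: (ltnP a b) => H; try (exfalso; lia)
 | |- context [if ?a == ?b then _ else _] =>
      let H := fresh in case: (@eqP _ a b) => H; try (exfalso; lia)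
 end.

Definition in_range (M K x : nat) : nat := if K <= x then if x <= 2 * M - K then 1 else 0 else 0.

Lemma left_count_small M K d j : d <= K -> K <= M -> j <= M ->
  left_count M K d j = in_range M K (d + 2 * j) + in_range M K (d + 2 * j + 1).
Proof.
move=> h1 h2 hj; rewrite /left_count /in_range /left_lo /left_hi.
by case: j hj => [|j] hj /=; case_ifs; case_minmax; lia.
Qed.

Lemma right_count_small M K d j : d <= K -> K <= M -> j <= M ->
  right_count M K d j =
  (if d + 1 <= 2 * j then in_range M K (2 * j - d - 1) else 0) +
  (if d <= 2 * j then in_range M K (2 * j - d) else 0).
Proof.
move=> h1 h2 hj; rewrite /right_count /in_range /right_lo /right_hi.
by case_ifs; case_minmax; lia.
Qed.

Lemma left_count_large M K d j : K <= d -> d <= M -> j <= M ->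
  left_count M K d j =
  (if j == 0 then d - K else 0) + (if M - d < j then if j <= M - K then 1 else 0 else 0) +
  (if j < M - d then 2 else if j == M - d then 1 else 0).
Proof.
move=> h1 h2 hj; rewrite /left_count /left_lo /left_hi.
by case: j hj => [|j] hj /=; case_ifs; case_minmax; lia.
Qed.

Lemma right_count_large M K d j : K <= d -> d <= M -> j <= M ->
  right_count M K d j =
  (if j == M then d - K else 0) + (if K <= j then if j < d then 1 else 0 else 0) +
  (if j == d then 1 else if d < j then 2 else 0).
Proof.
move=> h1 h2 hj; rewrite /right_count /right_lo /right_hi.
by case_ifs; case_minmax; lia.
Qed.

Lemma profile_wide M K L j : M = K + L -> K <= L -> j <= M ->
  gap_profile M K L j = if j == 0 then L - K + 2 else if j == M then L - K + 2 else 2.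
Proof.
move=> -> h hj; rewrite /gap_profile left_count_large ?right_count_large; try lia.
by case_ifs; lia.
Qed.

Lemma profile_middle0 M j : 1 <= M -> j <= M ->
  gap_profile M 0 0 j = if j == 0 then 3 else if j == M then 3 else 4.
Proof.
move=> h hj; rewrite /gap_profile left_count_small ?right_count_small // /in_range.
by case_ifs; lia.
Qed.

Lemma profile_middle1 M j : 2 <= M -> j <= M ->
  gap_profile M 1 0 j = if j == 0 then 1 else if j == M then 1 else 4.
Proof.
move=> h hj; rewrite /gap_profile left_count_small ?right_count_small /in_range; try lia.
by case_ifs; lia.
Qed.

(* Z_1 in two variables has the single basis {x_0 x_1}. *)
Lemma profile_edge j : j <= 1 -> gap_profile 1 1 0 j = 1.
Proof. by case: j => [|[|j]]. Qed.

Lemma profile_extreme M K L j : M = K + L -> 2 * L + 2 <= K -> j <= M ->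
  gap_profile M K M j =
  if j == 0 then L + 1 else if j == M then L + 1
  else if j <= L then 1 else if K <= j then 1 else 0.
Proof.
move=> -> h hj; rewrite /gap_profile left_count_large ?right_count_large; try lia.
by case_ifs; lia.
Qed.

Lemma profile_odd M K L j : M = 3 * L + 1 -> K = 2 * L + 1 -> 1 <= L -> j <= M ->
  gap_profile M K 0 j + 3 * gap_profile M K K j =
  if j < L then 6 else if 2 * L + 1 < j then 6 else 4.
Proof.
move=> -> -> h hj; rewrite /gap_profile.
rewrite left_count_small ?right_count_small ?left_count_large ?right_count_large /in_range;
  try lia.
by case_ifs; lia.
Qed.

Lemma profile_triple M K L j : M = K + L -> L < K -> K <= 2 * L -> j <= M ->
  gap_profile M K (2 * L - K + 1) j + gap_profile M K (2 * L) j +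
  gap_profile M K (2 * L + 1) j =
  if j == 0 then 4 * L - 2 * K + 5 else if j == M then 4 * L - 2 * K + 5 else 4.
Proof.
move=> -> h1 h2 hj; rewrite /gap_profile (@left_count_small _ _ (2 * L - K + 1))
  ?(@right_count_small _ _ (2 * L - K + 1)) ?left_count_large ?right_count_large /in_range;
  try lia.
by case_ifs; lia.
Qed.

Definition rep (T : Type) (r : nat) (s : seq T) : seq T := flatten (nseq r s).

Lemma mem_rep (T : eqType) r (s : seq T) x : x \in rep r s -> x \in s.
Proof. by elim: r => [|r IH] //=; rewrite mem_cat => /orP[] // /IH. Qed.

Lemma total_occ_cat n (s1 s2 : seq {set monomial n}) i :
  total_occ (s1 ++ s2) i = total_occ s1 i + total_occ s2 i.
Proof. by rewrite /total_occ big_cat. Qed.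

Lemma total_occ_rep n r (s : seq {set monomial n}) i :
  total_occ (rep r s) i = r * total_occ s i.
Proof.
elim: r => [|r IH]; first by rewrite /total_occ big_nil.
by rewrite /rep /= -/(rep r s) total_occ_cat IH mulSn.
Qed.

Lemma total_occ_gap n M K t d (i : 'I_n.+1) : K <= M -> n = M + 2 * t ->
  total_occ [:: gap_basis n M K t d] i =
  if t <= i <= t + M then gap_profile M K d (i - t) else 0.
Proof. by move=> *; rewrite /total_occ big_seq1 gap_basis_occ. Qed.

Definition all_bases n lo (s : seq {set monomial n}) : Prop :=
  forall B, B \in s -> is_quad_monomial_basis lo B.

Lemma all_bases_cat n lo (s1 s2 : seq {set monomial n}) :
  all_bases lo s1 -> all_bases lo s2 -> all_bases lo (s1 ++ s2).
Proof. by move=> h1 h2 B; rewrite mem_cat => /orP[/h1|/h2]. Qed.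

Lemma all_bases_rep n lo r (s : seq {set monomial n}) :
  all_bases lo s -> all_bases lo (rep r s).
Proof. by move=> h B /mem_rep /h. Qed.

Lemma all_bases_gap n M K t d : K <= M -> n = M + 2 * t ->
  all_bases (K + 2 * t) [:: gap_basis n M K t d].
Proof. by move=> hK hn B; rewrite inE => /eqP ->; apply: gap_basis_ok. Qed.

Definition window_balanced n t M K (s : seq {set monomial n}) (c : nat) : Prop :=
  [/\ s != [::], 0 < c, all_bases (K + 2 * t) s &
      forall i : 'I_n.+1, total_occ s i = if t <= i <= t + M then c else 0].

Lemma window_point n t : n = 2 * t -> window_balanced t 0 0 [:: gap_basis n 0 0 t 0] 2.
Proof.
move=> hn; split => //; first exact: all_bases_gap.
by move=> i; rewrite total_occ_gap //; case: ifP => // hi; have -> : i - t = 0 by lia.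
Qed.

Lemma window_edge n t : n = 1 + 2 * t -> window_balanced t 1 1 [:: gap_basis n 1 1 t 0] 1.
Proof.
move=> hn; split => //; first exact: all_bases_gap.
by move=> i; rewrite total_occ_gap //; case: ifP => // /andP[h1 h2]; rewrite profile_edge //; lia.
Qed.

Lemma window_K0 n t M : 1 <= M -> n = M + 2 * t ->
  window_balanced t M 0 (gap_basis n M 0 t M :: rep M [:: gap_basis n M 0 t 0]) (4 * M + 2).
Proof.
move=> hM hn; split => //; first lia.
  by apply: (all_bases_cat (s1 := [:: _])); [|apply: all_bases_rep]; apply: all_bases_gap.
move=> i; rewrite (total_occ_cat [:: _]) total_occ_rep !total_occ_gap //; try lia.
case: (boolP (t <= i <= t + M)) => hi; last by rewrite muln0.
rewrite (@profile_wide M 0 M) ?profile_middle0 //; try lia.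
by case_ifs; lia.
Qed.

Lemma window_K1 n t M : 2 <= M -> n = M + 2 * t ->
  window_balanced t M 1
    (rep 3 [:: gap_basis n M 1 t (M - 1)] ++ rep (M - 2) [:: gap_basis n M 1 t 0]) (4 * M - 2).
Proof.
move=> hM hn; split => //; first lia.
  by apply: all_bases_cat; apply: all_bases_rep; apply: all_bases_gap; lia.
move=> i; rewrite total_occ_cat !total_occ_rep !total_occ_gap //; try lia.
case: (boolP (t <= i <= t + M)) => hi; last by rewrite !muln0.
rewrite (@profile_wide M 1 (M - 1)) ?profile_middle1 //; try lia.
by case_ifs; lia.
Qed.

(* 2 <= K <= L: the excess of C_L at the window ends is compensated by the
   inner window [t+1, t+M-1]. *)
Lemma window_wide n t K L s1 c1 : 2 <= K <= L -> n = K + L + 2 * t ->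
  window_balanced (t + 1) (K + L - 2) (K - 2) s1 c1 ->
  window_balanced t (K + L) K
    (rep c1 [:: gap_basis n (K + L) K t L] ++ rep (L - K) s1) (c1 * (L - K + 2)).
Proof.
move=> /andP[hK hKL] hn [_ c1_pos s1_ok s1_occ]; split.
- by case: c1 c1_pos {s1_occ}.
- by rewrite muln_gt0 c1_pos; lia.
- apply: all_bases_cat; apply: all_bases_rep; first by apply: all_bases_gap; lia.
  by have <- : K - 2 + 2 * (t + 1) = K + 2 * t by lia.
move=> i; rewrite total_occ_cat !total_occ_rep s1_occ total_occ_gap; try lia.
case: (boolP (t <= i <= t + (K + L))) => hi; last by case_ifs; lia.
by rewrite (@profile_wide (K + L) K L); try lia; case_ifs; nia.
Qed.

Lemma window_mid n t K L s1 c1 : 2 <= K -> L < K <= 2 * L -> n = K + L + 2 * t ->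
  window_balanced (t + 1) (K + L - 2) (K - 2) s1 c1 ->
  window_balanced t (K + L) K
    (rep c1 ([:: gap_basis n (K + L) K t (2 * L - K + 1)] ++
             [:: gap_basis n (K + L) K t (2 * L)] ++
             [:: gap_basis n (K + L) K t (2 * L + 1)]) ++ rep (4 * L - 2 * K + 1) s1)
    (c1 * (4 * L - 2 * K + 5)).
Proof.
move=> hK /andP[hLK hKL] hn [_ c1_pos s1_ok s1_occ]; split.
- by case: c1 c1_pos {s1_occ}.
- by rewrite muln_gt0 c1_pos; lia.
- apply: all_bases_cat; apply: all_bases_rep.
    by do 2 (apply: all_bases_cat; first by apply: all_bases_gap; lia); apply: all_bases_gap; lia.
  by have <- : K - 2 + 2 * (t + 1) = K + 2 * t by lia.
move=> i; rewrite !(total_occ_cat, total_occ_rep) s1_occ !total_occ_gap; try lia.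
case: (boolP (t <= i <= t + (K + L))) => hi; last by case_ifs; lia.
by rewrite addnA (@profile_triple (K + L) K L); try lia; case_ifs; nia.
Qed.

(* K = 2L + 1: the deficit of C_0 + 3 C_K on [t+L, t+2L+1] is filled by a
   solution for Z_1 on that window. *)
Lemma window_odd n t L s2 c2 : 1 <= L -> n = 3 * L + 1 + 2 * t ->
  window_balanced (t + L) (L + 1) 1 s2 c2 ->
  window_balanced t (3 * L + 1) (2 * L + 1)
    (rep c2 (gap_basis n (3 * L + 1) (2 * L + 1) t 0 ::
             rep 3 [:: gap_basis n (3 * L + 1) (2 * L + 1) t (2 * L + 1)]) ++ rep 2 s2)
    (6 * c2).
Proof.
move=> hL hn [_ c2_pos s2_ok s2_occ]; split.
- by case: c2 c2_pos {s2_occ}.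
- by rewrite muln_gt0 c2_pos; lia.
- apply: all_bases_cat; apply: all_bases_rep.
    by apply: (all_bases_cat (s1 := [:: _])); [|apply: all_bases_rep]; apply: all_bases_gap; lia.
  by have <- : 1 + 2 * (t + L) = 2 * L + 1 + 2 * t by lia.
move=> i; rewrite total_occ_cat !total_occ_rep (total_occ_cat [:: _]) total_occ_rep s2_occ.
rewrite !total_occ_gap; try lia.
case: (boolP (t <= i <= t + (3 * L + 1))) => hi; last by case_ifs; lia.
by rewrite (@profile_odd (3 * L + 1) (2 * L + 1) L); try lia; case_ifs; nia.
Qed.

(* K >= 2L + 2: C_M misses the middle window [t+L+1, t+M-L-1], which gets its
   own solution; the inner window [t+1, t+M-1] then levels the rest. *)
Lemma window_narrow n t K L s1 c1 s2 c2 : 2 * L + 2 <= K -> n = K + L + 2 * t ->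
  window_balanced (t + 1) (K + L - 2) (K - 2) s1 c1 ->
  window_balanced (t + L + 1) (K - L - 2) (K - 2 * L - 2) s2 c2 ->
  window_balanced t (K + L) K
    (rep (c1 * c2) [:: gap_basis n (K + L) K t (K + L)] ++ rep (L * c2) s1 ++ rep c1 s2)
    (c1 * c2 * (L + 1)).
Proof.
move=> hK hn [_ c1_pos s1_ok s1_occ] [_ c2_pos s2_ok s2_occ]; split.
- have : 0 < c1 * c2 by rewrite muln_gt0 c1_pos.
  by case: (c1 * c2).
- by rewrite !muln_gt0 c1_pos c2_pos; lia.
- apply: all_bases_cat; first by apply: all_bases_rep; apply: all_bases_gap; lia.
  apply: all_bases_cat; apply: all_bases_rep.
    by have <- : K - 2 + 2 * (t + 1) = K + 2 * t by lia.
  by have <- : K - 2 * L - 2 + 2 * (t + L + 1) = K + 2 * t by lia.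
move=> i; rewrite !total_occ_cat !total_occ_rep s1_occ s2_occ total_occ_gap; try lia.
case: (boolP (t <= i <= t + (K + L))) => hi; last by case_ifs; lia.
by rewrite (@profile_extreme (K + L) K L); try lia; case_ifs; nia.
Qed.

Lemma window_exists n M K t : K <= M -> n = M + 2 * t ->
  exists s c, @window_balanced n t M K s c.
Proof.
elim/ltn_ind: M K t => M IH K t hK hn.
case: (posnP M) => [M0 | M_pos].
  have K0 : K = 0 by lia.
  by subst M K; eexists; eexists; apply: window_point.
case: (posnP K) => [-> | K_pos]; first by eexists; eexists; apply: window_K0.
case: (eqVneq K 1) => [-> | K_ne1].
  case: (eqVneq M 1) => [M1 | M_ne1]; first by subst M; eexists; eexists; apply: window_edge.
  by eexists; eexists; apply: window_K1; lia.
have [L hM] : exists L, M = K + L by exists (M - K); lia.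
subst M; have [|||s1 [c1 inner]] := IH (K + L - 2) _ (K - 2) (t + 1); try lia.
case: (leqP K L) => hKL; first by eexists; eexists; apply: window_wide inner; lia.
case: (leqP K (2 * L)) => hK2L; first by eexists; eexists; apply: window_mid inner; lia.
case: (eqVneq K (2 * L + 1)) => [hKodd | hK'].
  have [|||s2 [c2 middle]] := IH (L + 1) _ 1 (t + L); try lia.
  have -> : K + L = 3 * L + 1 by lia.
  by rewrite hKodd; eexists; eexists; apply: window_odd middle; lia.
have [|||s2 [c2 middle]] := IH (K - L - 2) _ (K - 2 * L - 2) (t + L + 1); try lia.
by eexists; eexists; apply: window_narrow inner middle; lia.
Qed.

Theorem proposition6p7 (n k : nat) (hn : (1 <= n)%N) (hk : (k <= n)%N) :
  exists s : seq {set monomial n},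
    s != [::] /\
    (forall B, B \in s -> is_quad_monomial_basis k B) /\
    X_balanced s.
Proof.
have hn0 : n = n + 2 * 0 by rewrite muln0 addn0.
have [s [c [s_nil _ s_bases s_occ]]] := window_exists hk hn0.
exists s; split=> //; split.
  by move=> B /s_bases; rewrite muln0 addn0.
by exists c => i; rewrite s_occ /= add0n -ltnS ltn_ord.
Qed.
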